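(* Let $\mathrm{SL}(2,\mathbb C)$ act on $\mathfrak{sl}(3,\mathbb C)$ by $g\cdot M=\iota(g)M\iota(g)^{-1}$, where $\iota(g)=\begin{pmatrix} g&0\\0&1\end{pmatrix}$, and on $\mathbb C[\mathfrak{sl}(3)]$ by $(g\cdot f)(M)=f(g^{-1}\cdot M)$. Define $$\mathcal I_1=h_0,\quad \mathcal I_2=h_1^2+4x_1y_1,\quad \mathcal I_3=x_2y_2+x_3y_3,$$ $$\mathcal I_4=h_1y_2y_3+y_1y_2^2-x_1y_3^2,\quad \mathcal I_5=h_1x_2x_3+x_1x_2^2-x_3^2y_1,$$ $$\mathcal I_6=h_1(x_2y_2-x_3y_3)-2(y_1y_2x_3+x_1x_2y_3).$$ Then each $\mathcal I_i$ is $\mathrm{SL}(2)$-invariant, and $\mathcal I_1,\dots,\mathcal I_6$ generate the invariant ring: $\mathbb C[\mathfrak{sl}(3)]^{\mathrm{SL}(2)}=\mathbb C[\mathcal I_1,\dots,\mathcal I_6]$.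
   Context: For $M=(m_{ij})\in\mathfrak{sl}(3,\mathbb C)$ (traceless $3\times 3$ complex matrices) define the linear coordinate functions $x_1=m_{12}$, $y_1=m_{21}$, $x_2=m_{23}$, $y_2=m_{32}$, $x_3=m_{13}$, $y_3=m_{31}$, $h_1=m_{11}-m_{22}$, and $h_0=\tfrac12(m_{11}+m_{22})-m_{33}$. These eight functions form a basis of the dual space of $\mathfrak{sl}(3,\mathbb C)$, so $\mathbb C[\mathfrak{sl}(3)]$ is the polynomial ring in them. *)

From HB Require Import structures.
From mathcomp Require Import all_boot all_order all_algebra.
Set Implicit Arguments. Unset Strict Implicit. Unset Printing Implicit Defensive.
Import Order.TTheory GRing.Theory.
Local Open Scope ring_scope.

Inductive pexpr (R : Type) (n : nat) : Type :=
| PVar : 'I_n -> pexpr R n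
| PC : R -> pexpr R n
| PAdd : pexpr R n -> pexpr R n -> pexpr R n
| PMul : pexpr R n -> pexpr R n -> pexpr R n.
Arguments PVar {R n}.
Arguments PC {R n}.
Arguments PAdd {R n}.
Arguments PMul {R n}.

Fixpoint peval (R : pzRingType) (n : nat) (env : 'I_n -> R) (p : pexpr R n) : R :=
  match p with
  | PVar i => env i
  | PC c => c
  | PAdd p q => peval env p + peval env q
  | PMul p q => peval env p * peval env q
  end.

Section SL3.
Variable F : fieldType.

Definition i3 (k : nat) : 'I_3 := inord k.

Definition in_sl3 (M : 'M[F]_3) : Prop := \tr M = 0.

(* Coordinates, indexed 0..7 as x1,y1,x2,y2,x3,y3,h1,h0 *)
Definition coords (M : 'M[F]_3) (k : 'I_8) : F :=
  nth 0 [:: M (i3 0) (i3 1); M (i3 1) (i3 0);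
           M (i3 1) (i3 2); M (i3 2) (i3 1);
           M (i3 0) (i3 2); M (i3 2) (i3 0);
           M (i3 0) (i3 0) - M (i3 1) (i3 1);
           (M (i3 0) (i3 0) + M (i3 1) (i3 1)) / 2%:R - M (i3 2) (i3 2)] k.

Definition iota (g : 'M[F]_2) : 'M[F]_3 :=
  \matrix_(i < 3, j < 3)
    if (i < 2)%N && (j < 2)%N then g (inord i) (inord j)
    else (i == j)%:R.

Definition in_SL2 (g : 'M[F]_2) : Prop := \det g = 1.

Definition act (g : 'M[F]_2) (M : 'M[F]_3) : 'M[F]_3 :=
  iota g *m M *m invmx (iota g).

(* Elements of C[sl(3)] are represented by polynomial expressions in the 8
   coordinate functions, viewed as functions on sl(3).  (g.f)(M) = f(g^-1 . M). *)
Definition sl2_invariant (f : pexpr F 8) : Prop :=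
  forall g : 'M[F]_2, in_SL2 g -> forall M : 'M[F]_3, in_sl3 M ->
    peval (coords M) f = peval (coords (act (invmx g) M)) f.

Definition X (k : nat) : pexpr F 8 := PVar (inord k).
Local Notation "p '+e' q" := (PAdd p q) (at level 50, left associativity).
Local Notation "p '*e' q" := (PMul p q) (at level 40, left associativity).
Local Notation "c %:C" := (PC c) (at level 2).

Definition x1 := X 0. Definition y1 := X 1. Definition x2 := X 2.
Definition y2 := X 3. Definition x3 := X 4. Definition y3 := X 5.
Definition h1 := X 6. Definition h0 := X 7.

Definition I1 : pexpr F 8 := h0.
Definition I2 : pexpr F 8 := h1 *e h1 +e (4%:R)%:C *e x1 *e y1.
Definition I3 : pexpr F 8 := x2 *e y2 +e x3 *e y3.
Definition I4 : pexpr F 8 :=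
  h1 *e y2 *e y3 +e y1 *e y2 *e y2 +e (-1)%:C *e x1 *e y3 *e y3.
Definition I5 : pexpr F 8 :=
  h1 *e x2 *e x3 +e x1 *e x2 *e x2 +e (-1)%:C *e x3 *e x3 *e y1.
Definition I6 : pexpr F 8 :=
  h1 *e (x2 *e y2 +e (-1)%:C *e x3 *e y3)
  +e (-(2%:R))%:C *e (y1 *e y2 *e x3 +e x1 *e x2 *e y3).

Definition Inv (i : 'I_6) : pexpr F 8 :=
  nth I1 [:: I1; I2; I3; I4; I5; I6] i.

End SL3.

From Pilot Require Import Defs.
From HB Require Import structures.
From mathcomp Require Import all_boot all_order all_algebra.
From mathcomp Require Import ring.
Import GRing.Theory.
Set Implicit Arguments. Unset Strict Implicit. Unset Printing Implicit Defensive.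
Local Open Scope ring_scope.

(* Write J : F^8 -> F^6 for the map sending the coordinates z of a matrix to
   (I1(z), ..., I6(z)); the coordinates e0, ..., e5 of F^6 stand for I1..I6.
   F has characteristic 0 throughout (density arguments, 2 and 3 invertible).
   1. Each I_i is invariant: in explicit coordinates, the action of g
      multiplies I2..I6 by a power of det g and shifts I1 by a multiple of
      det g - 1.
   2. Slice: if I3 != 0, some g in SL(2) moves the matrix to a normal form
      whose coordinates are polynomials in J divided by powers of I3.  Hence
      an invariant f satisfies f I3^d = G(J) wherever I3 != 0, and then
      everywhere, since a polynomial vanishing off {I3 = 0} is zero.
   3. Descent: J satisfies the syzygy e5^2 + 4 e3 e4 = e1 e2^2 and maps
      {I3 = 0} onto the part e4 != 0 of the nullcone {e2 = 0,
      e5^2 + 4 e3 e4 = 0}.  If f I3^(N+1) = P(J), then P vanishes there.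
      Writing P = E(e5^2) + e5 O(e5^2) and using both square roots of
      -4 e3 e4 (F is algebraically closed), E and O vanish on
      {e2 = 0, e5 = -4 e3 e4}; dividing by e5 + 4 e3 e4 and by e2 and
      evaluating at e5 = I6^2 gives P(J) = I3 R(J), whence f I3^N = R(J). *)

Section PolyExprs.
Variable R : comNzRingType.

Fixpoint psubst {n m} (p : pexpr R n) (s : 'I_n -> pexpr R m) : pexpr R m :=
  match p with
  | PVar i => s i
  | PC c => PC c
  | PAdd p q => PAdd (psubst p s) (psubst q s)
  | PMul p q => PMul (psubst p s) (psubst q s)
  end.

Lemma peval_subst n m (p : pexpr R n) s (e : 'I_m -> R) :
  peval e (psubst p s) = peval (fun i => peval e (s i)) p.
Proof. by elim: p => //= p IHp q IHq; rewrite IHp IHq. Qed.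

Lemma peval_ext n (e1 e2 : 'I_n -> R) p :
  e1 =1 e2 -> peval e1 p = peval e2 p.
Proof. by move=> e12; elim: p => [i|c|p IHp q IHq|p IHp q IHq] /=; rewrite ?IHp ?IHq. Qed.

Fixpoint pexp {n} (p : pexpr R n) d : pexpr R n :=
  if d is d'.+1 then PMul p (pexp p d') else PC 1.

Lemma peval_pexp n (p : pexpr R n) d e : peval e (pexp p d) = peval e p ^+ d.
Proof. by elim: d => //= d ->; rewrite exprS. Qed.

Definition updv {n} k (c : pexpr R n) : 'I_n -> pexpr R n :=
  fun i => if i == k then c else PVar i.

Lemma psubst_var_factor n (p : pexpr R n) k c : exists D, forall e,
  peval e p - peval e (psubst p (updv k c)) = (e k - peval e c) * peval e D.
Proof.
elim: p => [i|a|p [D1 H1] q [D2 H2]|p [D1 H1] q [D2 H2]].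
- rewrite /updv /=; case: eqP => [->|_].
  + by exists (PC 1) => e /=; rewrite mulr1.
  + by exists (PC 0) => e /=; rewrite subrr mulr0.
- by exists (PC 0) => e /=; rewrite subrr mulr0.
- by exists (PAdd D1 D2) => e /=; rewrite mulrDr -H1 -H2; ring.
- exists (PAdd (PMul D1 q) (PMul (psubst p (updv k c)) D2)) => e /=.
  by rewrite mulrDr mulrA -H1 mulrCA -H2; ring.
Qed.
End PolyExprs.

Definition upd {T : Type} {n} (e : 'I_n -> T) k v : 'I_n -> T :=
  fun i => if i == k then v else e i.

Lemma upd_id (T : Type) n (e : 'I_n -> T) k : upd e k (e k) =1 e.
Proof. by move=> i; rewrite /upd; case: eqP => // ->. Qed.

Lemma upd_same (T : Type) n (e : 'I_n -> T) k v : upd e k v k = v.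
Proof. by rewrite /upd eqxx. Qed.

Lemma ord_inord (T : Type) n (e : 'I_n.+1 -> T) (k : 'I_n.+1) : e k = e (inord k).
Proof. by congr e; apply/val_inj; rewrite /= inordK. Qed.

Lemma inord_eqE n i j : (i < n.+1)%N -> (j < n.+1)%N ->
  (inord i == inord j :> 'I_n.+1) = (i == j).
Proof. by move=> ? ?; rewrite -val_eqE /= !inordK. Qed.

Lemma peval_updv (R : comNzRingType) n (p : pexpr R n) k c e :
  peval e (psubst p (updv k c)) = peval (upd e k (peval e c)) p.
Proof. by rewrite peval_subst; apply: peval_ext => i; rewrite /updv /upd; case: eqP. Qed.

Lemma upd_upd (T : Type) n (e : 'I_n -> T) k v w : upd (upd e k v) k w =1 upd e k w.
Proof. by move=> i; rewrite /upd; case: eqP. Qed.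

Lemma even_odd_split (R : comNzRingType) n (p : pexpr R n) k : exists E O, forall e,
  peval e p = peval (upd e k (e k ^+ 2)) E + e k * peval (upd e k (e k ^+ 2)) O.
Proof.
elim: p => [i|a|p [E1 [O1 H1]] q [E2 [O2 H2]]|p [E1 [O1 H1]] q [E2 [O2 H2]]].
- case: (eqVneq i k) => [->|ne].
  + by exists (PC 0), (PC 1) => e /=; rewrite add0r mulr1.
  + by exists (PVar i), (PC 0) => e /=; rewrite mulr0 addr0 /upd (negbTE ne).
- by exists (PC a), (PC 0) => e /=; rewrite mulr0 addr0.
- by exists (PAdd E1 E2), (PAdd O1 O2) => e /=; rewrite H1 H2; ring.
- exists (PAdd (PMul E1 E2) (PMul (PVar k) (PMul O1 O2))),
         (PAdd (PMul E1 O2) (PMul O1 E2)) => e /=.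
  by rewrite H1 H2 upd_same; ring.
Qed.

Lemma clear_denominators (R : comNzRingType) m n (v : ('I_n -> R) -> 'I_m -> R)
    (w : pexpr R n) (e : nat) (Gk : 'I_m -> pexpr R n) :
  (forall j k, peval j w != 0 -> v j k * peval j w ^+ e = peval j (Gk k)) ->
  forall f : pexpr R m, exists d (G : pexpr R n), forall j,
    peval j w != 0 -> peval (v j) f * peval j w ^+ d = peval j G.
Proof.
move=> vG; elim=> [k|c|p [d1 [G1 H1]] q [d2 [G2 H2]]|p [d1 [G1 H1]] q [d2 [G2 H2]]].
- by exists e, (Gk k) => j; exact: vG.
- by exists 0%N, (PC c) => j _ /=; rewrite expr0 mulr1.
- exists (d1 + d2)%N, (PAdd (PMul G1 (pexp w d2)) (PMul G2 (pexp w d1))) => j w0 /=.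
  by rewrite !peval_pexp -H1 // -H2 // exprD; ring.
- exists (d1 + d2)%N, (PMul G1 G2) => j w0 /=.
  by rewrite -H1 // -H2 // exprD; ring.
Qed.

Section Density.
Variable F : fieldType.
Hypothesis charF : [pchar F] =i pred0.

Lemma natf_neq0_char0 n : (n.+1%:R : F) != 0.
Proof. by rewrite ((pcharf0P _).1 charF). Qed.

Lemma natf_inj : injective (fun n : nat => n%:R : F).
Proof.
move=> i j /= eqij; wlog le_ij : i j eqij / (i <= j)%N.
  by move=> W; case: (leqP i j) => h; [|symmetry]; apply: W => //; exact: ltnW.
have : ((j - i)%:R : F) == 0 by rewrite natrB // eqij subrr.
by rewrite ((pcharf0P _).1 charF) subn_eq0 => le_ji; apply/eqP; rewrite eqn_leq le_ij.
Qed.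

Section Line.
Variables (n : nat) (k : 'I_n) (e : 'I_n -> F).

Fixpoint restrict_line (p : pexpr F n) : {poly F} :=
  match p with
  | PVar i => if i == k then 'X else (e i)%:P
  | PC c => c%:P
  | PAdd p q => restrict_line p + restrict_line q
  | PMul p q => restrict_line p * restrict_line q
  end.

Lemma restrict_lineE p t : (restrict_line p).[t] = peval (upd e k t) p.
Proof.
elim: p => [i|c|p IHp q IHq|p IHp q IHq] /=; rewrite ?hornerE ?IHp ?IHq //.
by rewrite /upd; case: eqP; rewrite ?hornerE.
Qed.

(* In characteristic 0, vanishing on a punctured line forces vanishing on it:
   the restricted polynomial has infinitely many roots t0 + 1, t0 + 2, ... *)
Lemma vanish_on_line (p : pexpr F n) t0 :
  (forall t, t != t0 -> peval (upd e k t) p = 0) -> forall t, peval (upd e k t) p = 0.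
Proof.
move=> p0 t; rewrite -restrict_lineE.
suff -> : restrict_line p = 0 by rewrite horner0.
apply: (@roots_geq_poly_eq0 _ _
  [seq t0 + (i.+1)%:R | i <- iota 0 (size (restrict_line p))]).
- apply/allP => x /mapP [i _ ->]; apply/rootP; rewrite restrict_lineE p0 //.
  by rewrite -subr_eq0 addrC addKr ((pcharf0P _).1 charF).
- by rewrite map_inj_uniq ?iota_uniq // => i j /addrI /natf_inj [].
- by rewrite seq.size_map size_iota.
Qed.
End Line.

Lemma vanish_off_coord n (p : pexpr F n) k :
  (forall e, e k != 0 -> peval e p = 0) -> forall e, peval e p = 0.
Proof.
move=> p0 e; rewrite -(peval_ext p (upd_id e k)).
by apply: (vanish_on_line (t0 := 0)) => t t_neq0; apply: p0; rewrite upd_same.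
Qed.

Lemma vanish_off_coords2 n (p : pexpr F n) k1 k2 :
  (forall e, e k1 != 0 -> e k2 != 0 -> peval e p = 0) -> forall e, peval e p = 0.
Proof.
move=> p0; apply: (vanish_off_coord (k := k1)) => e e1.
rewrite -(peval_ext p (upd_id e k2)).
apply: (vanish_on_line (t0 := 0)) => t t_neq0; apply: p0; last by rewrite upd_same.
by rewrite /upd; case: (k1 == k2).
Qed.
End Density.

Section ExplicitMatrices.
Variable R : comNzRingType.

Definition mk3 (a00 a01 a02 a10 a11 a12 a20 a21 a22 : R) : 'M[R]_3 :=
  \matrix_(i, j) nth 0 (nth [::] [:: [:: a00; a01; a02]; [:: a10; a11; a12];
                                   [:: a20; a21; a22]] i) j.
Definition mk2 (a b c d : R) : 'M[R]_2 :=
  \matrix_(i, j) nth 0 (nth [::] [:: [:: a; b]; [:: c; d]] i) j.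

Lemma mk3E (M : 'M[R]_3) : M = mk3 (M (i3 0) (i3 0)) (M (i3 0) (i3 1)) (M (i3 0) (i3 2))
  (M (i3 1) (i3 0)) (M (i3 1) (i3 1)) (M (i3 1) (i3 2))
  (M (i3 2) (i3 0)) (M (i3 2) (i3 1)) (M (i3 2) (i3 2)).
Proof.
apply/matrixP => i j; rewrite mxE.
case: i => [[|[|[|//]]] Hi]; case: j => [[|[|[|//]]] Hj] /=;
  by congr (M _ _); apply/val_inj; rewrite /= /i3 inordK.
Qed.

Lemma mk2E (M : 'M[R]_2) : M = mk2 (M (inord 0) (inord 0)) (M (inord 0) (inord 1))
  (M (inord 1) (inord 0)) (M (inord 1) (inord 1)).
Proof.
apply/matrixP => i j; rewrite mxE.
case: i => [[|[|//]] Hi]; case: j => [[|[|//]] Hj] /=;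
  by congr (M _ _); apply/val_inj; rewrite /= inordK.
Qed.

Lemma mk3_mul a00 a01 a02 a10 a11 a12 a20 a21 a22 b00 b01 b02 b10 b11 b12 b20 b21 b22 :
  mk3 a00 a01 a02 a10 a11 a12 a20 a21 a22 *m mk3 b00 b01 b02 b10 b11 b12 b20 b21 b22 =
  mk3 (a00*b00 + a01*b10 + a02*b20) (a00*b01 + a01*b11 + a02*b21) (a00*b02 + a01*b12 + a02*b22)
      (a10*b00 + a11*b10 + a12*b20) (a10*b01 + a11*b11 + a12*b21) (a10*b02 + a11*b12 + a12*b22)
      (a20*b00 + a21*b10 + a22*b20) (a20*b01 + a21*b11 + a22*b21) (a20*b02 + a21*b12 + a22*b22).
Proof.
apply/matrixP => i j; rewrite !mxE !big_ord_recr big_ord0 /= !mxE /= add0r.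
by case: i => [[|[|[|//]]] Hi]; case: j => [[|[|[|//]]] Hj].
Qed.

Lemma mk2_mul a b c d a' b' c' d' : mk2 a b c d *m mk2 a' b' c' d' =
  mk2 (a*a' + b*c') (a*b' + b*d') (c*a' + d*c') (c*b' + d*d').
Proof.
apply/matrixP => i j; rewrite !mxE !big_ord_recr big_ord0 /= !mxE /= add0r.
by case: i => [[|[|//]] Hi]; case: j => [[|[|//]] Hj].
Qed.

Lemma mk3_1 : 1%:M = mk3 1 0 0 0 1 0 0 0 1.
Proof.
apply/matrixP => i j; rewrite !mxE.
by case: i => [[|[|[|//]]] Hi]; case: j => [[|[|[|//]]] Hj].
Qed.

Lemma mk2_1 : 1%:M = mk2 1 0 0 1.
Proof.
apply/matrixP => i j; rewrite !mxE.
by case: i => [[|[|//]] Hi]; case: j => [[|[|//]] Hj].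
Qed.

Lemma det_mk2 a b c d : \det (mk2 a b c d) = a * d - b * c.
Proof.
rewrite (expand_det_row _ 0) !big_ord_recr big_ord0 /= /cofactor !det_mx11 !mxE /=.
by rewrite add0r; ring.
Qed.

Lemma trace_mk3 a00 a01 a02 a10 a11 a12 a20 a21 a22 :
  \tr (mk3 a00 a01 a02 a10 a11 a12 a20 a21 a22) = a00 + a11 + a22.
Proof. by rewrite /mxtrace !big_ord_recr big_ord0 /= !mxE /= add0r. Qed.
End ExplicitMatrices.

Lemma invmx_right (R : comUnitRingType) n (A B : 'M[R]_n.+1) :
  A *m B = 1%:M -> invmx A = B.
Proof.
move=> AB; have [Au _] := mulmx1_unit AB.
by rewrite -[RHS](mulKmx Au) AB mulmx1.
Qed.

Section ExplicitAction.
Variable F : fieldType.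

Lemma coords_mk3 (a00 a01 a02 a10 a11 a12 a20 a21 a22 : F) k :
  coords (mk3 a00 a01 a02 a10 a11 a12 a20 a21 a22) k =
  nth 0 [:: a01; a10; a12; a21; a02; a20; a00 - a11; (a00 + a11) / 2%:R - a22] k.
Proof. by rewrite /coords /i3 !mxE !inordK. Qed.

Lemma iota_mk2 (a b c d : F) : Defs.iota (mk2 a b c d) = mk3 a b 0 c d 0 0 0 1.
Proof.
apply/matrixP => i j; rewrite !mxE.
by case: i => [[|[|[|//]]] Hi]; case: j => [[|[|[|//]]] Hj]; rewrite /= ?mxE ?inordK.
Qed.

Lemma invmx_mk2 (a b c d : F) : a * d - b * c = 1 ->
  invmx (mk2 a b c d) = mk2 d (-b) (-c) a.
Proof.
move=> det1; apply: invmx_right; rewrite mk2_mul mk2_1.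
by congr mk2; (ring || (rewrite -[RHS]det1; ring)).
Qed.

Lemma act_mk2 (a b c d : F) M : a * d - b * c = 1 ->
  act (mk2 a b c d) M = mk3 a b 0 c d 0 0 0 1 *m M *m mk3 d (-b) 0 (-c) a 0 0 0 1.
Proof.
move=> det1; rewrite /act.
have -> : invmx (Defs.iota (mk2 a b c d)) = Defs.iota (mk2 d (-b) (-c) a).
  apply: invmx_right; rewrite !iota_mk2 mk3_mul mk3_1.
  by congr mk3; (ring || (rewrite -[RHS]det1; ring)).
by rewrite !iota_mk2.
Qed.

Lemma act_inv_mk2 (a b c d : F) M : a * d - b * c = 1 ->
  act (invmx (mk2 a b c d)) M = mk3 d (-b) 0 (-c) a 0 0 0 1 *m M *m mk3 a b 0 c d 0 0 0 1.
Proof.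
by move=> det1; rewrite invmx_mk2 // act_mk2 ?opprK //; rewrite -det1; ring.
Qed.

Lemma act_sl3 (g : 'M[F]_2) M : in_SL2 g -> in_sl3 M -> in_sl3 (act (invmx g) M).
Proof.
rewrite /in_SL2 (mk2E g) det_mk2 /in_sl3 => det1 trM.
rewrite act_inv_mk2 // -mulmxA mxtrace_mulC -mulmxA mk3_mul.
rewrite (_ : mk3 _ _ _ _ _ _ _ _ _ = 1%:M) ?mulmx1 // mk3_1.
by congr mk3; (ring || (rewrite -[RHS]det1; ring)).
Qed.
End ExplicitAction.

Section Invariance.
Variable F : fieldType.

(* Step 1: with det g = 1, the transformed I2..I6 equal det g ^ w times the
   original ones (w = 2, 1, 2, 2, 2), and I1 = h0 changes by
   (det g - 1) (m11 + m22) / 2. *)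
Lemma Inv_invariant i : sl2_invariant (Inv F i).
Proof.
move=> g; rewrite /in_SL2 (mk2E g) det_mk2.
move: (g (inord 0) (inord 0)) (g (inord 0) (inord 1))
      (g (inord 1) (inord 0)) (g (inord 1) (inord 1)) => a b c d det1 M.
rewrite /in_sl3 act_inv_mk2 // (mk3E M) !mk3_mul trace_mk3.
move: (M (i3 0) (i3 0)) (M (i3 0) (i3 1)) (M (i3 0) (i3 2))
      (M (i3 1) (i3 0)) (M (i3 1) (i3 1)) (M (i3 1) (i3 2))
      (M (i3 2) (i3 0)) (M (i3 2) (i3 1)) (M (i3 2) (i3 2)).
move=> m00 m01 m02 m10 m11 m12 m20 m21 m22 trM.
have -> : m22 = - (m00 + m11) by rewrite -[LHS]subr0 -trM; ring.
have weight k (L R : F) : R = (a * d - b * c) ^+ k * L -> L = R.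
  by move=> ->; rewrite det1 expr1n mul1r.
have shift (L R y : F) : R = L + (a * d - b * c - 1) * y -> L = R.
  by move=> ->; rewrite det1 subrr mul0r addr0.
case: i => [[|[|[|[|[|[|//]]]]]] Hi];
  rewrite /Inv /= /I1 /I2 /I3 /I4 /I5 /I6 /X /= !coords_mk3 !inordK //=;
  [ apply: (shift _ _ ((m00 + m11) / 2%:R)) | apply: (weight 2%N)
  | apply: (weight 1%N) | apply: (weight 2%N) | apply: (weight 2%N)
  | apply: (weight 2%N) ]; ring.
Qed.
End Invariance.

Section InvariantMap.
Variable F : fieldType.
Hypothesis charF : [pchar F] =i pred0.

Definition J (z : 'I_8 -> F) : 'I_6 -> F := fun i => peval z (Inv F i).

Definition zk (z : 'I_8 -> F) k := z (inord k).

Definition Jlist (z : 'I_8 -> F) : seq F :=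
  [:: zk z 7; zk z 6 * zk z 6 + 4%:R * zk z 0 * zk z 1;
      zk z 2 * zk z 3 + zk z 4 * zk z 5;
      zk z 6 * zk z 3 * zk z 5 + zk z 1 * zk z 3 * zk z 3 + (-1) * zk z 0 * zk z 5 * zk z 5;
      zk z 6 * zk z 2 * zk z 4 + zk z 0 * zk z 2 * zk z 2 + (-1) * zk z 4 * zk z 4 * zk z 1;
      zk z 6 * (zk z 2 * zk z 3 + (-1) * zk z 4 * zk z 5)
        + (- 2%:R) * (zk z 1 * zk z 3 * zk z 4 + zk z 0 * zk z 2 * zk z 5)].

Lemma J_inord z k : (k < 6)%N -> J z (inord k) = nth 0 (Jlist z) k.
Proof.
move=> lt_k6; have JE (i : 'I_6) : J z i = nth 0 (Jlist z) i.
  by case: i => [[|[|[|[|[|[|//]]]]]] Hi].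
by rewrite JE inordK.
Qed.

Lemma J_syzygy z : J z (inord 5) ^+ 2 + 4%:R * J z (inord 3) * J z (inord 4)
   = J z (inord 1) * J z (inord 2) ^+ 2.
Proof. by rewrite !J_inord //=; ring. Qed.

(* Density of {I3 != 0}: on the y3-line through a point with x3 != 0,
   I3 = x2 y2 + x3 y3 vanishes at a single point; the points with x3 = 0
   follow by density in the x3 direction. *)
Lemma vanish_off_I3 (H : pexpr F 8) :
  (forall z, J z (inord 2) != 0 -> peval z H = 0) -> forall z, peval z H = 0.
Proof.
move=> H0; apply: (vanish_off_coord charF (k := inord 4)) => z z4.
rewrite -(peval_ext H (upd_id z (inord 5))).
apply: (vanish_on_line charF (t0 := - (zk z 2 * zk z 3) / zk z 4)) => t t_neq.
apply: H0; rewrite J_inord //= /zk /upd !inord_eqE //=.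
apply: contraNneq t_neq => I3_0; apply/eqP.
transitivity (((zk z 2 * zk z 3 + zk z 4 * t) - zk z 2 * zk z 3) / zk z 4).
  by rewrite /zk; field.
by rewrite /zk I3_0 sub0r.
Qed.

Lemma extend_off_I3 (f : pexpr F 8) d (G : pexpr F 6) :
  (forall z, J z (inord 2) != 0 -> peval z f * J z (inord 2) ^+ d = peval (J z) G) ->
  forall z, peval z f * J z (inord 2) ^+ d = peval (J z) G.
Proof.
move=> fG z; apply/eqP; rewrite -subr_eq0; apply/eqP.
pose H := PAdd (PMul f (pexp (Inv F (inord 2)) d)) (PMul (PC (-1)) (psubst G (Inv F))).
have HE y : peval y H = peval y f * J y (inord 2) ^+ d - peval (J y) G.
  by rewrite /= peval_subst peval_pexp /J; ring.
rewrite -HE; apply: vanish_off_I3 => y I3y.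
by rewrite HE fG // subrr.
Qed.
End InvariantMap.

Section Slice.
Variable F : fieldType.
Hypothesis charF : [pchar F] =i pred0.

Definition mat_of_coords (z : 'I_8 -> F) : 'M[F]_3 :=
  mk3 ((2%:R / 3%:R * zk z 7 + zk z 6) / 2%:R) (zk z 0) (zk z 4)
      (zk z 1) ((2%:R / 3%:R * zk z 7 - zk z 6) / 2%:R) (zk z 2)
      (zk z 5) (zk z 3) (- (2%:R / 3%:R * zk z 7)).

Lemma mat_of_coordsP z : in_sl3 (mat_of_coords z) /\ coords (mat_of_coords z) =1 z.
Proof.
have n2 := natf_neq0_char0 charF 1; have n3 := natf_neq0_char0 charF 2.
split; first by rewrite /in_sl3 trace_mk3; field; rewrite n2 n3.
move=> k; rewrite coords_mk3 (ord_inord z k) -/(zk z k).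
by case: k => [[|[|[|[|[|[|[|[|//]]]]]]]] Hk] //=; field; rewrite ?n2 ?n3.
Qed.

(* The normal form: the point with x2 = y2 = 0, x3 = 1 and invariants j. *)
Definition slice (j : 'I_6 -> F) : 'I_8 -> F := fun k => nth 0
  [:: -(j (inord 3)) / (j (inord 2)) ^+ 2; - j (inord 4); 0; 0; 1; j (inord 2);
      - j (inord 5) / j (inord 2); j (inord 0)] k.

(* Step 2: where I3 != 0, an invariant takes the same value at z as at the
   normal form of J z; the moving element of SL(2) is the inverse of
   [[y3 / I3, y2 / I3], [-x2, x3]]. *)
Lemma invariant_on_slice (f : pexpr F 8) : sl2_invariant f ->
  forall z, J z (inord 2) != 0 -> peval z f = peval (slice (J z)) f.
Proof.
move=> f_inv z I3z; have [slM cM] := mat_of_coordsP z.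
have n2 := natf_neq0_char0 charF 1; have n3 := natf_neq0_char0 charF 2.
move: (I3z); rewrite J_inord //= => I3z'.
pose s := zk z 2 * zk z 3 + zk z 4 * zk z 5.
pose h := mk2 (zk z 5 / s) (zk z 3 / s) (- zk z 2) (zk z 4).
have det_h : (zk z 5 / s) * zk z 4 - (zk z 3 / s) * (- zk z 2) = 1 by rewrite /s; field.
have SL2h : in_SL2 (invmx h) by rewrite /in_SL2 det_inv det_mk2 det_h invr1.
rewrite -(peval_ext f cM) (f_inv _ SL2h _ slM) invmxK act_mk2 // !mk3_mul.
apply: peval_ext => k; rewrite coords_mk3 /slice.
by case: k => [[|[|[|[|[|[|[|[|//]]]]]]]] Hk] /=;
  rewrite ?J_inord //= /s; field; rewrite ?n2 ?n3 ?I3z'.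
Qed.

Lemma slice_denominators (f : pexpr F 8) : exists d (G : pexpr F 6), forall j,
  j (inord 2) != 0 -> peval (slice j) f * j (inord 2) ^+ d = peval j G.
Proof.
pose V k : pexpr F 6 := PVar (inord k).
apply: (clear_denominators (w := V 2%N) (e := 2%N) (Gk := fun k => nth (PC 0)
  [:: PMul (PC (-1)) (V 3%N); PMul (PC (-1)) (PMul (V 4%N) (PMul (V 2%N) (V 2%N)));
      PC 0; PC 0; PMul (V 2%N) (V 2%N); PMul (V 2%N) (PMul (V 2%N) (V 2%N));
      PMul (PC (-1)) (PMul (V 5%N) (V 2%N)); PMul (V 0%N) (PMul (V 2%N) (V 2%N))] k)).
move=> j k /= j2; rewrite /slice.
by case: k => [[|[|[|[|[|[|[|[|//]]]]]]]] Hk] /=; field; rewrite ?j2.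
Qed.

Lemma invariant_times_I3_power (f : pexpr F 8) : sl2_invariant f ->
  exists d (G : pexpr F 6), forall z, peval z f * J z (inord 2) ^+ d = peval (J z) G.
Proof.
move=> f_inv; have [d [G fG]] := slice_denominators f.
exists d, G; apply: extend_off_I3 => // z I3z.
by rewrite (invariant_on_slice f_inv I3z) fG.
Qed.
End Slice.

Section NullCone.
Variable F : fieldType.
Hypothesis charF : [pchar F] =i pred0.

Lemma J_onto_nullcone (e : 'I_6 -> F) : e (inord 4) != 0 -> e (inord 2) = 0 ->
  e (inord 5) ^+ 2 + 4%:R * e (inord 3) * e (inord 4) = 0 ->
  exists z, J z =1 e.
Proof.
move=> e4 e2 cone.
have n2 := natf_neq0_char0 charF 1; have n4 := natf_neq0_char0 charF 3.
have e3E : e (inord 3) = - (e (inord 5) ^+ 2) / (4%:R * e (inord 4)).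
  by rewrite -[X in - X / _]subr0 -cone; field; rewrite n4 e4.
exists (fun k : 'I_8 => nth 0 [:: - e (inord 1) / (4%:R * e (inord 4)); - e (inord 4); 0;
   e (inord 5) / (2%:R * e (inord 4)); 1; 0; 0; e (inord 0)] k) => i.
rewrite (ord_inord (J _) i) (ord_inord e i).
case: i => [[|[|[|[|[|[|//]]]]]] Hi]; rewrite J_inord //= /zk !inordK //=;
  by rewrite ?e3E ?e2; field; rewrite ?n2 ?n4 ?e4.
Qed.

(* Restriction of an expression in e to {e2 = 0, e5 = -4 e3 e4}; applied to
   the parts of an expression in e5^2, this is restriction to the nullcone. *)
Definition nullcone_e5 : pexpr F 6 :=
  PMul (PC (- 4%:R)) (PMul (PVar (inord 3)) (PVar (inord 4))).

Definition nullcone_restrict (Q : pexpr F 6) : pexpr F 6 :=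
  psubst (psubst Q (updv (inord 5) nullcone_e5)) (updv (inord 2) (PC 0)).

Lemma nullcone_restrictE Q e : peval e (nullcone_restrict Q) =
  peval (upd (upd e (inord 2) 0) (inord 5) (- 4%:R * e (inord 3) * e (inord 4))) Q.
Proof.
rewrite /nullcone_restrict !peval_updv /= /upd !inord_eqE //=.
by apply: peval_ext => i; rewrite mulrA.
Qed.

(* If E vanishes on the nullcone, then E evaluated at J with e5 := I6^2 is
   divisible by I3: E minus its restriction lies in the ideal
   (e5 + 4 e3 e4, e2), and at e5 = I6^2 the syzygy turns e5 + 4 e3 e4 into
   I2 I3^2. *)
Lemma nullcone_divisible (E : pexpr F 6) :
  (forall e, peval e (nullcone_restrict E) = 0) -> exists D, forall z,
    peval (upd (J z) (inord 5) (J z (inord 5) ^+ 2)) E = J z (inord 2) * peval (J z) D.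
Proof.
move=> E0.
have [D1 HD1] := psubst_var_factor E (inord 5) nullcone_e5.
have [D2 HD2] :=
  psubst_var_factor (psubst E (updv (inord 5) nullcone_e5)) (inord 2) (PC 0).
pose sq5 : 'I_6 -> pexpr F 6 := updv (inord 5) (PMul (PVar (inord 5)) (PVar (inord 5))).
exists (PAdd (PMul (PVar (inord 1)) (PMul (PVar (inord 2)) (psubst D1 sq5)))
             (psubst D2 sq5)) => z.
set e := upd _ _ _.
have e5 : e (inord 5) = J z (inord 5) ^+ 2 by rewrite /e upd_same.
have e2 : e (inord 2) = J z (inord 2) by rewrite /e /upd inord_eqE.
have e3 : e (inord 3) = J z (inord 3) by rewrite /e /upd inord_eqE.
have e4 : e (inord 4) = J z (inord 4) by rewrite /e /upd inord_eqE.
have sq5E D : peval (J z) (psubst D sq5) = peval e D.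
  by rewrite peval_updv /= /e expr2.
have Ediv2 := HD2 e; rewrite E0 /= !subr0 e2 in Ediv2.
have Ediv1 := HD1 e; rewrite /= e5 e3 e4 in Ediv1.
rewrite /= !sq5E -[LHS](subrK (peval e (psubst E (updv (inord 5) nullcone_e5)))).
rewrite Ediv1 Ediv2.
by rewrite (_ : J z (inord 5) ^+ 2 - _ = J z (inord 1) * J z (inord 2) ^+ 2); [ring|
  rewrite -J_syzygy; ring].
Qed.
End NullCone.

Section Descent.
Variable F : closedFieldType.
Hypothesis charF : [pchar F] =i pred0.

Lemma sqrt_exists (a : F) : exists s, s ^+ 2 = a.
Proof.
have /closed_rootP [s /rootP] : size ('X^2 - a%:P : {poly F}) != 1%N by rewrite size_XnsubC.
by rewrite !hornerE => /eqP; rewrite subr_eq0 => /eqP <-; exists s.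
Qed.

(* If P vanishes on J({I3 = 0}), the restrictions of its even and odd parts
   in e5 vanish where e3, e4 != 0: evaluate P at the nullcone points with
   e5 = +-s, the two square roots of -4 e3 e4. *)
Lemma even_odd_parts_vanish (P E O : pexpr F 6) :
  (forall z, J z (inord 2) = 0 -> peval (J z) P = 0) ->
  (forall e, peval e P = peval (upd e (inord 5) (e (inord 5) ^+ 2)) E +
     e (inord 5) * peval (upd e (inord 5) (e (inord 5) ^+ 2)) O) ->
  forall e : 'I_6 -> F, e (inord 3) != 0 -> e (inord 4) != 0 ->
    peval e (nullcone_restrict E) = 0 /\ peval e (nullcone_restrict O) = 0.
Proof.
move=> P0 PEO e e3 e4.
have n2 := natf_neq0_char0 charF 1; have n4 := natf_neq0_char0 charF 3.
have [s s2] := sqrt_exists (- 4%:R * e (inord 3) * e (inord 4)).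
have s0 : s != 0.
  apply/eqP => s_eq0; move: s2; rewrite s_eq0 expr0n /= => /esym/eqP.
  by rewrite !mulNr oppr_eq0 !mulf_eq0 (negbTE n4) (negbTE e3) (negbTE e4).
have at_root sg : sg ^+ 2 = s ^+ 2 ->
    0 = peval e (nullcone_restrict E) + sg * peval e (nullcone_restrict O).
  move=> sg2; pose es := upd (upd e (inord 2) 0) (inord 5) sg.
  have [z Jz] : exists z, J z =1 es.
    apply: J_onto_nullcone => //; rewrite /es /upd ?inord_eqE //=.
    by rewrite sg2 s2; ring.
  have := P0 z; rewrite Jz /es /upd inord_eqE //= eqxx => /(_ erefl).
  rewrite (peval_ext P Jz) PEO /es upd_same !(peval_ext _ (upd_upd _ _ _ _)).
  by rewrite sg2 s2 !nullcone_restrictE; exact: esym.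
have Odd0 : peval e (nullcone_restrict O) = 0.
  have : (2%:R * s) * peval e (nullcone_restrict O) = 0.
    by rewrite -[RHS](subrr 0) {1}(at_root s erefl) (at_root (- s) (sqrrN s)); ring.
  by move/eqP; rewrite mulf_eq0 (negbTE (mulf_neq0 n2 s0)) => /eqP.
by split => //; rewrite (at_root s erefl) Odd0 mulr0 addr0.
Qed.

Lemma factor_I3 (P : pexpr F 6) :
  (forall z, J z (inord 2) = 0 -> peval (J z) P = 0) ->
  exists R, forall z, peval (J z) P = J z (inord 2) * peval (J z) R.
Proof.
move=> P0; have [E [O PEO]] := even_odd_split P (inord 5).
have parts0 := even_odd_parts_vanish P0 PEO.
have E0 : forall e, peval e (nullcone_restrict E) = 0.
  by apply: (vanish_off_coords2 charF) => e e3 e4; case: (parts0 e e3 e4).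
have O0 : forall e, peval e (nullcone_restrict O) = 0.
  by apply: (vanish_off_coords2 charF) => e e3 e4; case: (parts0 e e3 e4).
have [DE HDE] := nullcone_divisible E0; have [DO HDO] := nullcone_divisible O0.
exists (PAdd DE (PMul (PVar (inord 5)) DO)) => z.
by rewrite PEO HDE HDO /=; ring.
Qed.

Lemma descent (f : pexpr F 8) N (P : pexpr F 6) :
  (forall z, peval z f * J z (inord 2) ^+ N = peval (J z) P) ->
  exists Q, forall z, peval z f = peval (J z) Q.
Proof.
elim: N P => [|N IHN] P fP; first by exists P => z; rewrite -fP mulr1.
have [R PR] : exists R, forall z, peval (J z) P = J z (inord 2) * peval (J z) R.
  by apply: factor_I3 => z I3z; rewrite -fP I3z expr0n mulr0.
apply: (IHN R); apply: extend_off_I3 => // z I3z.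
by apply: (mulfI I3z); rewrite -PR -fP exprS; ring.
Qed.
End Descent.

Theorem mainTheorem4 (F : closedFieldType) (charF : [pchar F] =i pred0) :
  (forall i : 'I_6, sl2_invariant (Inv F i)) /\
  (forall f : pexpr F 8,
     sl2_invariant f <->
     exists P : pexpr F 6, forall M : 'M[F]_3, in_sl3 M ->
       peval (coords M) f = peval (fun i => peval (coords M) (Inv F i)) P).
Proof.
split; first exact: Inv_invariant.
move=> f; split.
- move=> f_inv; have [d [G fG]] := invariant_times_I3_power charF f_inv.
  by have [Q fQ] := descent charF fG; exists Q => M _; exact: fQ.
- case=> P fP g SL2g M slM.
  rewrite fP // fP; last exact: act_sl3.
  by apply: peval_ext => i; apply: Inv_invariant.
Qed.
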